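(* For all integers $m\geq 2$: (i) if $-\frac12<\lambda\leq 0$, then $$\widetilde A_{2,m}\geq\frac{(m-1)m(m+\lambda)(m+\lambda+1)\big(m^2+\lambda m-\frac12\big)\big(m^2+\lambda m-\frac{\lambda}{3}-\frac72\big)}{2(2\lambda+1)(2\lambda+5)};$$ (ii) if $\lambda\geq 0$, then $$\widetilde A_{2,m}\geq\frac{(m-1)m(m+\lambda)(m+\lambda+1)\big(m^2+\lambda m-\frac12\big)\big(m^2+\lambda m-\frac{\lambda}{2}-\frac72\big)}{2(2\lambda+1)(2\lambda+5)};$$ and for every $\lambda>-\frac12$, $$\widetilde A_{2,m}\leq\frac{(m-1)m^2(m+\lambda)^2(m+\lambda+1)\big(m^2+\lambda m-\frac12\big)}{2(2\lambda+1)(2\lambda+5)}.$$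
   Context: Fix $\lambda>-1/2$. Define $\widetilde Q_m$ by $\widetilde Q_0=1$, $\widetilde Q_1(\mu)=1-\frac{\lambda+1}{2}\mu$ and, for $m\geq2$, $$\widetilde Q_m-\widetilde Q_{m-1}=\frac{(m-1)(2m-1)(2m-1+\lambda)}{(m-1+\lambda)(2m-3+\lambda)(2m-3+2\lambda)}\big[\widetilde Q_{m-1}-\widetilde Q_{m-2}\big]-\frac{(2m-1)(2m-2+\lambda)(2m-1+\lambda)}{2(m-1+\lambda)}\,\mu\,\widetilde Q_{m-1}(\mu).$$ Write $\widetilde Q_m(\mu)=\sum_{i=0}^m(-1)^i\widetilde A_{i,m}\mu^i$; thus $\widetilde A_{2,m}$ is the coefficient of $\mu^2$ in $\widetilde Q_m$. *)

(* lambda ranges over an arbitrary real field R;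
   the polynomials Q~_m live in {poly R} with indeterminate 'X = mu. *)
From mathcomp Require Import all_boot all_order all_algebra.
Set Implicit Arguments. Unset Strict Implicit. Unset Printing Implicit Defensive.
Import Order.TTheory GRing.Theory Num.Theory.
Local Open Scope ring_scope.

Definition Qcoef1 {R : realFieldType} (l : R) (m : nat) : R :=
  let m' := m%:R in
  ((m' - 1) * (2 * m' - 1) * (2 * m' - 1 + l)) /
  ((m' - 1 + l) * (2 * m' - 3 + l) * (2 * m' - 3 + 2 * l)).

Definition Qcoef2 {R : realFieldType} (l : R) (m : nat) : R :=
  let m' := m%:R in
  ((2 * m' - 1) * (2 * m' - 2 + l) * (2 * m' - 1 + l)) / (2 * (m' - 1 + l)).

Fixpoint Qt {R : realFieldType} (l : R) (n : nat) {struct n} : {poly R} :=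
  match n with
  | 0 => 1
  | n'.+1 =>
    match n' with
    | 0 => 1 - ((l + 1) / 2) *: 'X
    | k.+1 =>
      (* n = k.+2 =: m, n' = m - 1, k = m - 2 *)
      Qt l n' + Qcoef1 l n *: (Qt l n' - Qt l k) - Qcoef2 l n *: ('X * Qt l n')
    end
  end.

Definition At {R : realFieldType} (l : R) (i m : nat) : R :=
  (-1) ^+ i * (Qt l m)`_i.

From mathcomp Require Import all_boot all_order all_algebra.
From mathcomp Require Import ring lra.
Set Implicit Arguments. Unset Strict Implicit. Unset Printing Implicit Defensive.
Import Order.TTheory GRing.Theory Num.Theory.
Local Open Scope ring_scope.

(* The coefficients satisfy A_{2,m} - A_{2,m-1} = c_1(m) (A_{2,m-1} - A_{2,m-2}) + c_2(m) A_{1,m-1},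
   where A_{1,m} = m (m + l) (m^2 + l m - 1/2) / (2 l + 1) solves the analogous recurrence for
   the first coefficient.  Since c_1(m) >= 0, a sequence vanishing at m = 0, 1 whose
   increments satisfy this recurrence with <= (resp. >=) stays below (resp. above) A_{2,m}.
   For each bound the defect is a rational function of x = m - 2 and l with positive
   denominator, whose numerator is a polynomial with nonnegative coefficients in x and
   s = l or s = l + 1/2 (plus, for l <= 0, such a polynomial times -l). *)

Lemma ler_recurrence (R : numDomainType) (c f u : nat -> R) :
  (forall n, 0 <= c n) ->
  f 0%N <= u 0%N -> f 1%N - f 0%N <= u 1%N - u 0%N ->
  (forall n, f n.+2 - f n.+1 - c n * (f n.+1 - f n)
             <= u n.+2 - u n.+1 - c n * (u n.+1 - u n)) ->
  forall n, f n <= u n.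
Proof.
move=> c_ge0 le0 le1 le_step.
have le_diff n : f n.+1 - f n <= u n.+1 - u n.
  elim: n => // n IH.
  by have := lerD (le_step n) (ler_wpM2l (c_ge0 n) IH); rewrite !subrK.
elim=> // n IH.
by rewrite -(subrK (f n) (f n.+1)) -(subrK (u n) (u n.+1)) lerD.
Qed.

Section HornerNat.
Variable R : numDomainType.

Fixpoint horner_nat (c : seq nat) (s : R) : R :=
  if c is a :: c' then a%:R + s * horner_nat c' s else 0.

Fixpoint horner_nat2 (c : seq (seq nat)) (x s : R) : R :=
  if c is row :: c' then horner_nat row s + x * horner_nat2 c' x s else 0.

(* Unfold by rewriting: [simpl] would expand the large numerals to unary form. *)
Lemma horner_nat_nil (s : R) : horner_nat [::] s = 0. Proof. by []. Qed.
Lemma horner_nat_cons a c (s : R) : horner_nat (a :: c) s = a%:R + s * horner_nat c s.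
Proof. by []. Qed.
Lemma horner_nat2_nil (x s : R) : horner_nat2 [::] x s = 0. Proof. by []. Qed.
Lemma horner_nat2_cons row c (x s : R) :
  horner_nat2 (row :: c) x s = horner_nat row s + x * horner_nat2 c x s.
Proof. by []. Qed.

Definition horner_natE := (horner_nat2_nil, horner_nat2_cons, horner_nat_nil, horner_nat_cons).

Lemma horner_nat_ge0 (c : seq nat) (s : R) : 0 <= s -> 0 <= horner_nat c s.
Proof. by move=> s_ge0; elim: c => //= a c IH; rewrite addr_ge0 ?mulr_ge0. Qed.

Lemma horner_nat2_ge0 (c : seq (seq nat)) (x s : R) :
  0 <= x -> 0 <= s -> 0 <= horner_nat2 c x s.
Proof.
move=> x_ge0 s_ge0; elim: c => //= row c IH.
by rewrite addr_ge0 ?mulr_ge0 ?horner_nat_ge0.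
Qed.

End HornerNat.

(* Obtained by clearing denominators in [A2_defect] for the three bounds below. *)
Definition cert_lower_pos : seq (seq nat) :=
  [:: [:: 48; 298; 727; 889; 571; 181; 22];
      [:: 368; 2058; 4362; 4468; 2315; 576; 59; 2];
      [:: 1184; 5932; 10724; 8933; 3579; 661; 53; 2];
      [:: 2080; 9260; 13866; 8948; 2574; 316; 16];
      [:: 2160; 8450; 9985; 4580; 815; 50];
      [:: 1328; 4498; 3836; 1042; 76];
      [:: 448; 1288; 644; 56];
      [:: 64; 152; 16]]%N.

Definition cert_lower_neg : seq (seq nat) :=
  [:: [:: 0; 75; 605; 1750; 2168; 1024; 64];
      [:: 0; 955; 6083; 13062; 10984; 3136; 32];
      [:: 0; 4896; 23694; 36096; 19664; 3056];
      [:: 0; 13144; 46168; 47024; 15008; 960];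
      [:: 0; 20040; 47920; 29280; 4160];
      [:: 0; 17440; 25344; 7040];
      [:: 0; 8064; 5376];
      [:: 0; 1536]]%N.

Definition cert_lower_neg_l : seq (seq nat) :=
  [:: [:: 0; 0; 0; 0; 0; 0; 32];
      [:: 0; 0; 0; 0; 0; 0; 32];
      [:: 0; 0; 0; 0; 0; 32]]%N.

Definition cert_upper : seq (seq nat) :=
  [:: [:: 0; 450; 2580; 5420; 5264; 2592; 640; 64];
      [:: 450; 7005; 24831; 35518; 24552; 8736; 1520; 96];
      [:: 4410; 35727; 84159; 84506; 41800; 10400; 1136; 32];
      [:: 16240; 83448; 134600; 94896; 32416; 5056; 256];
      [:: 29400; 100180; 110180; 52520; 11120; 800];
      [:: 28000; 62480; 44848; 12928; 1216];
      [:: 13440; 18368; 7616; 896];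
      [:: 2560; 1792; 256]]%N.

Section Qtilde.
Variables (R : realFieldType) (l : R).

Lemma QtSS n :
  Qt l n.+2 = Qt l n.+1 + Qcoef1 l n.+2 *: (Qt l n.+1 - Qt l n) - Qcoef2 l n.+2 *: ('X * Qt l n.+1).
Proof. by []. Qed.

Lemma coefS_QtSS i n :
  (Qt l n.+2)`_i.+1 = (Qt l n.+1)`_i.+1 + Qcoef1 l n.+2 * ((Qt l n.+1)`_i.+1 - (Qt l n)`_i.+1)
                      - Qcoef2 l n.+2 * (Qt l n.+1)`_i.
Proof. by rewrite QtSS coefB coefD !coefZ coefB coefXM. Qed.

Lemma At_rec i n :
  At l i.+1 n.+2 - At l i.+1 n.+1 - Qcoef1 l n.+2 * (At l i.+1 n.+1 - At l i.+1 n)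
  = Qcoef2 l n.+2 * At l i n.+1.
Proof. by rewrite /At coefS_QtSS exprS; ring. Qed.

Lemma At0 n : At l 0 n = 1.
Proof.
rewrite /At expr0 mul1r.
suff : (Qt l n)`_0 = 1 /\ (Qt l n.+1)`_0 = 1 by case.
elim: n => [|n [IH0 IH1]].
  by rewrite /= coef1 coefB coef1 coefZ coefX mulr0 subr0.
by rewrite QtSS coefB coefD !coefZ coefB coefXM IH0 IH1 subrr mulr0 addr0 /= mulr0 subr0.
Qed.

Lemma AtS_0 i : At l i.+1 0 = 0.
Proof. by rewrite /At coef1 /= mulr0. Qed.

Lemma At1_1 : At l 1 1 = (l + 1) / 2.
Proof. rewrite /At /= coefB coef1 coefZ coefX /=; ring. Qed.

Lemma AtSS_1 i : At l i.+2 1 = 0.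
Proof. by rewrite /At /= coefB coef1 coefZ coefX /= mulr0 subr0 mulr0. Qed.

Definition Qcoef1x (x : R) : R :=
  (x + 1) * (2 * x + 3) * (2 * x + 3 + l) /
  ((x + 1 + l) * (2 * x + 1 + l) * (2 * x + 1 + 2 * l)).

Definition Qcoef2x (x : R) : R :=
  (2 * x + 3) * (2 * x + 2 + l) * (2 * x + 3 + l) / (2 * (x + 1 + l)).

Lemma Qcoef1x_nat n : Qcoef1 l n.+2 = Qcoef1x n%:R.
Proof. by rewrite /Qcoef1 /Qcoef1x -[n.+2]addn2 natrD; congr (_ / _); ring. Qed.

Lemma Qcoef2x_nat n : Qcoef2 l n.+2 = Qcoef2x n%:R.
Proof. by rewrite /Qcoef2 /Qcoef2x -[n.+2]addn2 natrD; congr (_ / _); ring. Qed.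

Definition A1 (M : R) : R := M * (M + l) * (M ^+ 2 + l * M - 1 / 2) / (2 * l + 1).

Hypothesis l_gt : - (1 / 2) < l.

(* [lra] ignores section hypotheses, so [l_gt] is copied into the context. *)
Local Ltac lra_l := have ? := l_gt; lra.
Local Ltac nonzero := repeat (apply/andP; split); apply/eqP => ?; lra_l.

Lemma Qcoef1x_ge0 (x : R) : 0 <= x -> 0 <= Qcoef1x x.
Proof. by move=> x_ge0; apply: divr_ge0; repeat apply: mulr_ge0; lra_l. Qed.

Lemma A1_rec (x : R) : 0 <= x ->
  A1 (x + 2) - A1 (x + 1) - Qcoef1x x * (A1 (x + 1) - A1 x) = Qcoef2x x.
Proof. by move=> x_ge0; rewrite /A1 /Qcoef1x /Qcoef2x; field; nonzero. Qed.

Lemma At1E n : At l 1 n = A1 n%:R.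
Proof.
suff : At l 1 n = A1 n%:R /\ At l 1 n.+1 = A1 n.+1%:R by case.
elim: n => [|n [IH0 IH1]].
  split; first by rewrite AtS_0 mulr0n /A1 !mul0r.
  by rewrite At1_1 mulr1n /A1; field; nonzero.
split=> //; move: (At_rec 0 n).
rewrite At0 mulr1 IH0 IH1 Qcoef1x_nat Qcoef2x_nat -[n.+2]addn2 -[n.+1]addn1 !natrD.
by rewrite -A1_rec // => /addIr/addIr.
Qed.

Definition A2_defect (F : R -> R) (x : R) : R :=
  Qcoef2x x * A1 (x + 1) - (F (x + 2) - F (x + 1) - Qcoef1x x * (F (x + 1) - F x)).

Lemma A2_defect_nat (F : R -> R) n :
  Qcoef2 l n.+2 * At l 1 n.+1 - (F n.+2%:R - F n.+1%:R - Qcoef1 l n.+2 * (F n.+1%:R - F n%:R))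
  = A2_defect F n%:R.
Proof. by rewrite At1E Qcoef1x_nat Qcoef2x_nat -[n.+2]addn2 -[n.+1]addn1 !natrD. Qed.

Lemma At2_ge (F : R -> R) : F 0 = 0 -> F 1 = 0 ->
  (forall x, 0 <= x -> 0 <= A2_defect F x) -> forall n, F n%:R <= At l 2 n.
Proof.
move=> F0 F1 F_defect.
apply: (ler_recurrence (c := fun n => Qcoef1 l n.+2)).
- by move=> n; rewrite Qcoef1x_nat Qcoef1x_ge0.
- by rewrite mulr0n F0 AtS_0.
- by rewrite mulr0n mulr1n F0 F1 AtS_0 AtSS_1 subrr.
- by move=> n; rewrite At_rec -subr_ge0 A2_defect_nat F_defect.
Qed.

Lemma At2_le (F : R -> R) : F 0 = 0 -> F 1 = 0 ->
  (forall x, 0 <= x -> A2_defect F x <= 0) -> forall n, At l 2 n <= F n%:R.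
Proof.
move=> F0 F1 F_defect.
apply: (ler_recurrence (c := fun n => Qcoef1 l n.+2)).
- by move=> n; rewrite Qcoef1x_nat Qcoef1x_ge0.
- by rewrite mulr0n F0 AtS_0.
- by rewrite mulr0n mulr1n F0 F1 AtS_0 AtSS_1 subrr.
- by move=> n; rewrite At_rec -subr_le0 A2_defect_nat F_defect.
Qed.

Let D := 2 * (2 * l + 1) * (2 * l + 5).

Definition A2_lower_neg (M : R) : R :=
  (M - 1) * M * (M + l) * (M + l + 1) * (M ^+ 2 + l * M - 1 / 2)
  * (M ^+ 2 + l * M - l / 3 - 7 / 2) / D.

Definition A2_lower_pos (M : R) : R :=
  (M - 1) * M * (M + l) * (M + l + 1) * (M ^+ 2 + l * M - 1 / 2)
  * (M ^+ 2 + l * M - l / 2 - 7 / 2) / D.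

Definition A2_upper (M : R) : R :=
  (M - 1) * M ^+ 2 * (M + l) ^+ 2 * (M + l + 1) * (M ^+ 2 + l * M - 1 / 2) / D.

Definition denom (x : R) : R :=
  (x + 1 + l) * (2 * x + 1 + l) * (2 * x + 1 + 2 * l) * ((2 * l + 1) * (2 * l + 5)).

Lemma denom_gt0 (x : R) : 0 <= x -> 0 < denom x.
Proof. by move=> x_ge0; repeat apply: mulr_gt0; lra_l. Qed.

Lemma A2_defect_lower_pos (x : R) : 0 <= x ->
  A2_defect A2_lower_pos x = horner_nat2 cert_lower_pos x l / (4 * denom x).
Proof.
move=> x_ge0; rewrite /A2_defect /A2_lower_pos /D /A1 /Qcoef1x /Qcoef2x /denom.
rewrite /cert_lower_pos !horner_natE.
by field; nonzero.
Qed.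

Lemma A2_defect_lower_neg (x : R) : 0 <= x ->
  A2_defect A2_lower_neg x = (horner_nat2 cert_lower_neg x (l + 1 / 2)
    + (- l) * horner_nat2 cert_lower_neg_l x (l + 1 / 2)) / (48 * denom x).
Proof.
move=> x_ge0; rewrite /A2_defect /A2_lower_neg /D /A1 /Qcoef1x /Qcoef2x /denom.
rewrite /cert_lower_neg /cert_lower_neg_l !horner_natE.
by field; nonzero.
Qed.

Lemma A2_defect_upper (x : R) : 0 <= x ->
  A2_defect A2_upper x = - (horner_nat2 cert_upper x (l + 1 / 2) / (32 * denom x)).
Proof.
move=> x_ge0; rewrite /A2_defect /A2_upper /D /A1 /Qcoef1x /Qcoef2x /denom.
rewrite /cert_upper !horner_natE.
by field; nonzero.
Qed.

Lemma scaled_denom_ge0 (k : nat) (x : R) : 0 <= x -> 0 <= k%:R * denom x.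
Proof. by move=> x_ge0; rewrite mulr_ge0 // ltW ?denom_gt0. Qed.

Lemma A2_lower_pos_le n : 0 <= l -> A2_lower_pos n%:R <= At l 2 n.
Proof.
move=> l_ge0; apply: At2_ge => [||x x_ge0]; [by rewrite /A2_lower_pos; ring.. |].
rewrite A2_defect_lower_pos //; apply: divr_ge0; last exact: scaled_denom_ge0.
exact: horner_nat2_ge0.
Qed.

Lemma A2_lower_neg_le n : l <= 0 -> A2_lower_neg n%:R <= At l 2 n.
Proof.
move=> l_le0; apply: At2_ge => [||x x_ge0]; [by rewrite /A2_lower_neg; ring.. |].
have s_ge0 : 0 <= l + 1 / 2 by lra_l.
rewrite A2_defect_lower_neg //; apply: divr_ge0; last exact: scaled_denom_ge0.
apply: addr_ge0; first exact: horner_nat2_ge0.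
by apply: mulr_ge0; [rewrite oppr_ge0 | exact: horner_nat2_ge0].
Qed.

Lemma A2_upper_ge n : At l 2 n <= A2_upper n%:R.
Proof.
apply: At2_le => [||x x_ge0]; [by rewrite /A2_upper; ring.. |].
have s_ge0 : 0 <= l + 1 / 2 by lra_l.
rewrite A2_defect_upper // oppr_le0; apply: divr_ge0; last exact: scaled_denom_ge0.
exact: horner_nat2_ge0.
Qed.

End Qtilde.

Theorem lemma3p6 (R : realFieldType) (l : R) (m : nat) :
  - (1 / 2) < l -> (2 <= m)%N ->
  let M := m%:R in
  let D := 2 * (2 * l + 1) * (2 * l + 5) in
  (l <= 0 ->
     (M - 1) * M * (M + l) * (M + l + 1) * (M ^+ 2 + l * M - 1 / 2)
       * (M ^+ 2 + l * M - l / 3 - 7 / 2) / D <= At l 2 m) /\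
  (0 <= l ->
     (M - 1) * M * (M + l) * (M + l + 1) * (M ^+ 2 + l * M - 1 / 2)
       * (M ^+ 2 + l * M - l / 2 - 7 / 2) / D <= At l 2 m) /\
  At l 2 m <=
     (M - 1) * M ^+ 2 * (M + l) ^+ 2 * (M + l + 1) * (M ^+ 2 + l * M - 1 / 2) / D.
Proof.
move=> l_gt _ M D; split; [|split].
- exact: A2_lower_neg_le.
- exact: A2_lower_pos_le.
- exact: A2_upper_ge.
Qed.
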